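(* For $\alpha\in[-1,1]$ let $\rho(\alpha)=\tfrac12(I+\alpha\sigma_z)=\tfrac12\begin{pmatrix}1+\alpha&0\\0&1-\alpha\end{pmatrix}$. Then for all $\alpha,\beta\in[-1,1]$ and $p\ge1$, $$D^p_{z,p}(\rho(\alpha),\rho(\beta))=2^{p-1}|\alpha-\beta|.$$
   Context: Qubit setting: $\mathcal{H}=\mathbb{C}^2$, $\mathcal{H}^*$ is identified with $\mathbb{C}^2$ via the dual basis, and $A^T$ is the usual matrix transpose; operators on $\mathcal{H}\otimes\mathcal{H}^*$ are $4\times4$ matrices in the basis $e_1\otimes e_1^*,e_1\otimes e_2^*,e_2\otimes e_1^*,e_2\otimes e_2^*$. $\sigma_z=\begin{pmatrix}1&0\\0&-1\end{pmatrix}$. The set of couplings of states $\rho,\omega$ is $\mathcal{C}(\rho,\omega)=\{\Pi\in\mathcal{S}(\mathcal{H}\otimes\mathcal{H}^* ):\mathrm{tr}_{\mathcal{H}^*}[\Pi]=\omega,\ \mathrm{tr}_{\mathcal{H}}[\Pi]=\rho^T\}$. For $p\ge1$, $C_{z,p}=|\sigma_z\otimes I^T-I\otimes\sigma_z^T|^p=\mathrm{diag}(0,2^p,2^p,0)$, and $D_{z,p}(\rho,\omega)=\big(\min_{\Pi\in\mathcal{C}(\rho,\omega)}\mathrm{tr}[\Pi C_{z,p}]\big)^{1/p}$. *)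

From HB Require Import structures.
From mathcomp Require Import all_boot all_order all_algebra.
From mathcomp Require Import complex.
From mathcomp Require Import boolp classical_sets reals exp.
Set Implicit Arguments. Unset Strict Implicit. Unset Printing Implicit Defensive.
Import Order.TTheory GRing.Theory Num.Theory.
Local Open Scope ring_scope.
Local Open Scope complex_scope.

Section QubitDefs.
Variable R : realType.
Local Notation C := R[i].

Definition adjmx (m n : nat) (A : 'M[C]_(m, n)) : 'M[C]_(n, m) :=
  map_mx Num.conj (A^T).

(* positive semidefinite (complex order: 0 <= z means z real and >= 0) *)
Definition psd (n : nat) (A : 'M[C]_n) : Prop :=
  adjmx A = A /\ forall v : 'cV[C]_n, 0 <= (adjmx v *m A *m v) 0 0.

Definition state (n : nat) (A : 'M[C]_n) : Prop := psd A /\ \tr A = 1.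

(* Index of e_i (x) e_j^* in the basis
   e1(x)e1*, e1(x)e2*, e2(x)e1*, e2(x)e2*  (0-based: 2 i + j). *)
Definition pidx (i j : 'I_2) : 'I_4 := inord (2 * i + j).

Definition kron2 (A B : 'M[C]_2) : 'M[C]_4 :=
  \matrix_(a, b) \sum_(i < 2) \sum_(j < 2) \sum_(i' < 2) \sum_(j' < 2)
     (if (a == pidx i j) && (b == pidx i' j') then A i i' * B j j' else 0).

(* partial trace over H^* : result is an operator on H *)
Definition ptr_Hstar (P : 'M[C]_4) : 'M[C]_2 :=
  \matrix_(i, i') \sum_(j < 2) P (pidx i j) (pidx i' j).

(* partial trace over H : result is an operator on H^* *)
Definition ptr_H (P : 'M[C]_4) : 'M[C]_2 :=
  \matrix_(j, j') \sum_(i < 2) P (pidx i j) (pidx i j').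

Definition coupling (rho omega : 'M[C]_2) (P : 'M[C]_4) : Prop :=
  state P /\ ptr_Hstar P = omega /\ ptr_H P = rho^T.

Definition sigma_z : 'M[C]_2 := \matrix_(i, j) (if i == j then
  (if i == 0 :> 'I_2 then 1 else -1) else 0).

Definition Zdiff : 'M[C]_4 := kron2 sigma_z 1%:M^T - kron2 1%:M sigma_z^T.

(* C_{z,p} = |Zdiff|^p, computed via the functional calculus of the
   diagonal (real) matrix Zdiff: entrywise |d|^p on the diagonal. *)
Definition Czp (p : R) : 'M[C]_4 :=
  \matrix_(a, b) (if a == b then ((`|complex.Re (Zdiff a a)| `^ p) %:C) else 0).

(* D_{z,p}(rho, omega) = (min_{Pi in C(rho,omega)} tr[Pi C_{z,p}])^(1/p);
   the minimum is taken as the infimum of the (real) costs. *)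
Definition Dzp (p : R) (rho omega : 'M[C]_2) : R :=
  (inf [set t : R | exists P, coupling rho omega P /\
                              \tr (P *m Czp p) = t%:C]) `^ (p^-1).

Definition rho_of (alpha : R) : 'M[C]_2 :=
  (2%:R^-1 : C) *: (1%:M + (alpha%:C) *: sigma_z).

End QubitDefs.

From HB Require Import structures.
From mathcomp Require Import all_boot all_order all_algebra.
From mathcomp Require Import complex.
From mathcomp Require Import boolp classical_sets reals exp.
From mathcomp Require Import ring zify lra.
Set Implicit Arguments. Unset Strict Implicit. Unset Printing Implicit Defensive.
Import Order.TTheory GRing.Theory Num.Theory.
Local Open Scope ring_scope.
Local Open Scope complex_scope.

(* The cost of a coupling [P] is [2^p] times its off-diagonal mass
   [P_11 + P_22] (indices 0..3 in the basis e_i (x) e_j^* ).  The marginal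
   constraints give [P_00 + P_11 = (1 + beta)/2] and [P_00 + P_22 = (1 + alpha)/2],
   so [P_22 - P_11 = (alpha - beta)/2] and, the diagonal of [P] being
   nonnegative, the cost is at least [2^p |alpha - beta| / 2].  The diagonal
   (classical) coupling that moves only the mass [|alpha - beta|/2] attains
   this bound, so the infimum is a minimum and [D^p] is [2^(p-1) |alpha - beta|]. *)

Lemma big_ord2 (V : nmodType) (F : 'I_2 -> V) :
  \sum_(i < 2) F i = F (inord 0) + F (inord 1).
Proof.
rewrite !big_ord_recr big_ord0 /= add0r.
by congr (_ + _); congr F; apply: val_inj; rewrite /= inordK.
Qed.

Lemma big_ord4 (V : nmodType) (F : 'I_4 -> V) :
  \sum_(i < 4) F i = F (inord 0) + F (inord 1) + F (inord 2) + F (inord 3).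
Proof.
rewrite !big_ord_recr big_ord0 /= add0r.
by congr (_ + _ + _ + _); congr F; apply: val_inj; rewrite /= inordK.
Qed.

Lemma inord_eqE n (a b : nat) : (a < n.+1)%N -> (b < n.+1)%N ->
  ((inord a : 'I_n.+1) == inord b) = (a == b).
Proof. by move=> Ha Hb; rewrite -val_eqE /= !inordK. Qed.

Lemma inf_attained (R : realType) (E : set R) (x : R) :
  E x -> lbound E x -> inf E = x.
Proof.
move=> Ex lbx; apply/eqP; rewrite eq_le; apply/andP; split.
  by apply: ge_inf => //; exists x.
by apply: lb_le_inf => //; exists x.
Qed.

Lemma pidx_val (i j : 'I_2) : nat_of_ord (pidx i j) = (2 * i + j)%N.
Proof. by rewrite /pidx inordK //; case: i => [[|[|i]]] Hi; case: j => [[|[|j]]] Hj. Qed.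

Lemma pidx_inord (i j : nat) : (i < 2)%N -> (j < 2)%N ->
  pidx (inord i) (inord j) = inord (2 * i + j).
Proof. by move=> Hi Hj; apply: val_inj; rewrite /= pidx_val !inordK //; lia. Qed.

Section QubitCouplings.
Variable R : realType.
Local Notation C := R[i].

Lemma ge0_complex_real (z : C) : 0 <= z -> exists2 u : R, z = u%:C & 0 <= u.
Proof. by case: z => u v; rewrite lecE /= => /andP[/eqP -> u0]; exists u. Qed.

Lemma psd_diag_ge0 n (A : 'M[C]_n) (k : 'I_n) : psd A -> 0 <= A k k.
Proof.
case=> _ /(_ (delta_mx k 0)).
have -> : adjmx (delta_mx k 0 : 'cV[C]_n) = delta_mx 0 k.
  apply/matrixP => a b; rewrite !mxE ord1 eqxx andbT.
  by case: (b == k); rewrite /= ?(rmorph1, rmorph0).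
by rewrite -rowE -colE !mxE.
Qed.

Lemma psd_diag_mx n (d : 'rV[C]_n) : (forall k, 0 <= d 0 k) -> psd (diag_mx d).
Proof.
move=> d_ge0; split.
  apply/matrixP => i j; rewrite !mxE eq_sym.
  by case: eqP => [->|_]; rewrite /= ?mulr1n ?geC0_conj ?mulr0n ?rmorph0.
move=> v; rewrite mul_mx_diag !mxE; apply: sumr_ge0 => j _.
rewrite !mxE mulrAC; apply: mulr_ge0 => //; rewrite mulrC.
exact: mul_conjC_ge0.
Qed.

Lemma Zdiff_diag (a : 'I_4) : Zdiff R a a =
  if nat_of_ord a == 1%N then 2 else if nat_of_ord a == 2%N then -2 else 0.
Proof.
rewrite /Zdiff !mxE !big_ord_recr !big_ord0 /= !add0r.
case: a => [[|[|[|[|?]]]] Ha] //=; rewrite !mxE -!val_eqE /= !pidx_val /=; ring.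
Qed.

Lemma Czp_inord (p : R) (k l : nat) : p != 0 -> (k < 4)%N -> (l < 4)%N ->
  Czp p (inord k) (inord l) =
  if (k == l) && ((k == 1) || (k == 2))%N then (2 `^ p)%:C else 0.
Proof.
move=> p0 Hk Hl; rewrite /Czp mxE inord_eqE //.
case: eqP => //= _; rewrite Zdiff_diag inordK //.
case: k Hk {Hl} => [|[|[|[|]]]] //= _; rewrite ?normr0 ?powR0 //=.
- by rewrite ger0_norm // addr_ge0.
- by rewrite normrN ger0_norm // addr_ge0.
Qed.

Lemma mxtrace_mul_Czp (p : R) (P : 'M[C]_4) : p != 0 ->
  \tr (P *m Czp p) = (2 `^ p)%:C * (P (inord 1) (inord 1) + P (inord 2) (inord 2)).
Proof.
move=> p0; rewrite /mxtrace big_ord4 ![(P *m _) _ _]mxE !big_ord4 !Czp_inord //=.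
by rewrite !mulr0 !addr0 !add0r; ring.
Qed.

Lemma rho_of_inord (a : R) (i j : nat) : (i < 2)%N -> (j < 2)%N ->
  rho_of a (inord i) (inord j) =
  if i == j then (if i == 0%N then ((1 + a) / 2)%:C else ((1 - a) / 2)%:C) else 0.
Proof.
move=> Hi Hj; rewrite /rho_of /sigma_z !mxE inord_eqE //.
case: eqP => [_|_]; last by rewrite mulr0 addr0 /= mulr0.
rewrite -val_eqE /= inordK //.
by case: i Hi {Hj} => [|[|]] //= _;
  rewrite !rmorphM !rmorphD /= ?rmorphN /= fmorphV /= rmorph_nat ?rmorph1; field.
Qed.

Lemma ptr_Hstar_inord (P : 'M[C]_4) i i' : (i < 2)%N -> (i' < 2)%N ->
  ptr_Hstar P (inord i) (inord i') =
  P (inord (2 * i)) (inord (2 * i')) + P (inord (2 * i + 1)) (inord (2 * i' + 1)).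
Proof. by move=> Hi Hi'; rewrite mxE big_ord2 !pidx_inord // !addn0. Qed.

Lemma ptr_H_inord (P : 'M[C]_4) j j' : (j < 2)%N -> (j' < 2)%N ->
  ptr_H P (inord j) (inord j') =
  P (inord j) (inord j') + P (inord (2 + j)) (inord (2 + j')).
Proof. by move=> Hj Hj'; rewrite mxE big_ord2 !pidx_inord. Qed.

Lemma coupling_rho_of_diff (a b : R) (P : 'M[C]_4) :
  coupling (rho_of a) (rho_of b) P ->
  P (inord 2) (inord 2) - P (inord 1) (inord 1) = ((a - b) / 2)%:C.
Proof.
case=> _ [Hs Ht].
have := congr1 (fun M : 'M[C]_2 => M (inord 0) (inord 0)) Hs.
have := congr1 (fun M : 'M[C]_2 => M (inord 0) (inord 0)) Ht.
rewrite /= ptr_Hstar_inord // ptr_H_inord // mxE !rho_of_inord //=.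
rewrite !muln0 add0n => Ea Eb.
have -> : P (inord 2) (inord 2) - P (inord 1) (inord 1) =
    (P (inord 0) (inord 0) + P (inord 2) (inord 2)) -
    (P (inord 0) (inord 0) + P (inord 1) (inord 1)) by ring.
by rewrite Ea Eb -rmorphB /=; congr (_%:C); field.
Qed.

Lemma coupling_cost_ge (a b p t : R) (P : 'M[C]_4) : p != 0 ->
  coupling (rho_of a) (rho_of b) P -> \tr (P *m Czp p) = t%:C ->
  2 `^ p * (`|a - b| / 2) <= t.
Proof.
move=> p0 cP; have [[P_psd _] _] := cP.
have := coupling_rho_of_diff cP; rewrite mxtrace_mul_Czp //.
have [u -> u0] := ge0_complex_real (psd_diag_ge0 (inord 1) P_psd).
have [w -> w0] := ge0_complex_real (psd_diag_ge0 (inord 2) P_psd).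
rewrite -rmorphB -rmorphD -rmorphM => /complexI Ediff /complexI <-.
apply: ler_wpM2l; first exact: powR_ge0.
by rewrite ler_pdivrMr // ler_norml; apply/andP; split; lra.
Qed.

Definition diag_coupling (d0 d1 d2 d3 : R) : 'M[C]_4 :=
  diag_mx (\row_k (nth 0 [:: d0; d1; d2; d3] k)%:C).

Lemma diag_coupling_inord (d0 d1 d2 d3 : R) k l : (k < 4)%N -> (l < 4)%N ->
  diag_coupling d0 d1 d2 d3 (inord k) (inord l) =
  if k == l then (nth 0 [:: d0; d1; d2; d3] k)%:C else 0.
Proof.
by move=> Hk Hl; rewrite !mxE inord_eqE // inordK //; case: eqP; rewrite ?mulr1n.
Qed.

Lemma coupling_diag_coupling (a b d0 d1 d2 d3 : R) :
  0 <= d0 -> 0 <= d1 -> 0 <= d2 -> 0 <= d3 ->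
  d0 + d1 = (1 + b) / 2 -> d2 + d3 = (1 - b) / 2 ->
  d0 + d2 = (1 + a) / 2 -> d1 + d3 = (1 - a) / 2 ->
  coupling (rho_of a) (rho_of b) (diag_coupling d0 d1 d2 d3).
Proof.
move=> d0_ge0 d1_ge0 d2_ge0 d3_ge0 Eb0 Eb1 Ea0 Ea1.
split; [split | split].
- apply: psd_diag_mx => k; rewrite mxE ler0c.
  by case: k => [[|[|[|[|?]]]] ?].
- rewrite /mxtrace big_ord4 !diag_coupling_inord //= -!rmorphD /=.
  by congr (_%:C); lra.
- apply/matrixP => x y; rewrite -[x]inord_val -[y]inord_val.
  rewrite ptr_Hstar_inord // rho_of_inord //.
  by case: x y => [[|[|?]] ?] [[|[|?]] ?] //=;
    rewrite !diag_coupling_inord //= ?addr0 -?rmorphD ?Eb0 ?Eb1.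
- apply/matrixP => x y; rewrite -[x]inord_val -[y]inord_val.
  rewrite ptr_H_inord // [(rho_of a)^T _ _]mxE rho_of_inord //.
  by case: x y => [[|[|?]] ?] [[|[|?]] ?] //=;
    rewrite !diag_coupling_inord //= ?addr0 -?rmorphD ?Ea0 ?Ea1.
Qed.

Lemma exists_optimal_coupling (a b p : R) : p != 0 ->
  -1 <= a <= 1 -> -1 <= b <= 1 ->
  exists2 P, coupling (rho_of a) (rho_of b) P &
    \tr (P *m Czp p) = (2 `^ p * (`|a - b| / 2))%:C.
Proof.
move=> p0 /andP[a1 a2] /andP[b1 b2].
have cost d0 d1 d2 d3 : \tr (diag_coupling d0 d1 d2 d3 *m Czp p) =
    (2 `^ p * (d1 + d2))%:C.
  by rewrite mxtrace_mul_Czp // !diag_coupling_inord //= rmorphM rmorphD.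
have [ab|ba] := leP a b.
- exists (diag_coupling ((1 + a) / 2) ((b - a) / 2) 0 ((1 - b) / 2)).
    by apply: coupling_diag_coupling; lra.
  by rewrite cost distrC ger0_norm ?subr_ge0 // addr0.
- exists (diag_coupling ((1 + b) / 2) 0 ((a - b) / 2) ((1 - a) / 2)).
    by apply: coupling_diag_coupling; lra.
  by rewrite cost ger0_norm ?subr_ge0 ?ltW // add0r.
Qed.
End QubitCouplings.

Theorem proposition3p9 (R : realType) (alpha beta p : R) :
  -1 <= alpha <= 1 -> -1 <= beta <= 1 -> 1 <= p ->
  (Dzp p (rho_of alpha) (rho_of beta)) `^ p = 2 `^ (p - 1) * `|alpha - beta|.
Proof.
move=> Ha Hb p1; have p0 : p != 0 by rewrite gt_eqF // (lt_le_trans ltr01 p1).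
rewrite /Dzp (@inf_attained _ _ (2 `^ p * (`|alpha - beta| / 2))).
- rewrite -powRrM mulVf // powRr1 ?mulr_ge0 ?powR_ge0 ?divr_ge0 ?invr_ge0 //.
  by rewrite powRB ?pnatr_eq0 ?implybT // powRr1 // mulrCA mulrC.
- case: (exists_optimal_coupling p0 Ha Hb) => P cP trP.
  by exists P.
- by move=> t [P [cP trP]]; exact: coupling_cost_ge p0 cP trP.
Qed.
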